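(* Let $\mathbb{F}\in\{\mathbb{R},\mathbb{C}\}$, let $k\in\{1,\dots,n\}$ be an integer and let $r>0$. Suppose $\boldsymbol A\in\mathbb{F}^{m\times n}$ satisfies the phaseless bi-Lipschitz condition on $\mathcal X=\{\boldsymbol x\in\mathbb{F}^n:\|\boldsymbol x\|_0\le(r+4)k\}$ with positive constants $L,U$, and $r>2(U/L)^2$. Then for all $\boldsymbol x\in\mathbb{F}^n$, all $\eta\ge0$, all $\boldsymbol e\in\mathbb{R}^m$ with $\|\boldsymbol e\|_2\le\eta$, and any $\boldsymbol x^\#\in\Delta_{1,\eta}(|\boldsymbol A\boldsymbol x|+\boldsymbol e)$, \[ \mathrm{dist}_1(\boldsymbol x^\#,\boldsymbol x)\le C_1\,\sigma_k(\boldsymbol x)_1+D_1\sqrt k\,\eta,\qquad \mathrm{dist}(\boldsymbol x^\#,\boldsymbol x)\le C_2\,\frac{\sigma_k(\boldsymbol x)_1}{\sqrt k}+D_2\,\eta, \] where \[ C_1=\frac{2\frac UL\big(r^{-1/2}+1\big)(2+r)^{1/2}}{1-\frac UL(2/r)^{1/2}}+2,\quad D_1=\frac1L\cdot\frac{2(2+r)^{1/2}}{1-\frac UL(2/r)^{1/2}}, \] \[ C_2=\frac{\frac UL\big(r^{-1/2}+1\big)\big(1+(r/2)^{-1/2}\big)}{1-\frac UL(2/r)^{1/2}}+r^{-1/2}+1,\quad D_2=\frac1L\cdot\frac{2\big(1+(r/2)^{-1/2}\big)}{1-\frac UL(2/r)^{1/2}}. \]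
   Context: $\mathbb{F}\in\{\mathbb{R},\mathbb{C}\}$. $\|\boldsymbol u\|_q$ is the usual $\ell_q$ norm, $\|\boldsymbol u\|_0$ the number of nonzero entries, $|\boldsymbol u|$ the vector of entrywise moduli. $\mathrm{dist}_q(\boldsymbol x,\boldsymbol y)=\min_{c\in\mathbb{F},|c|=1}\|\boldsymbol x-c\boldsymbol y\|_q$, $\mathrm{dist}=\mathrm{dist}_2$. $\Sigma_k=\{\boldsymbol z\in\mathbb{F}^n:\|\boldsymbol z\|_0\le k\}$, $\sigma_k(\boldsymbol x)_q=\min_{\boldsymbol z\in\Sigma_k}\mathrm{dist}_q(\boldsymbol x,\boldsymbol z)$. $\boldsymbol A$ satisfies the phaseless bi-Lipschitz condition on $\mathcal X$ with positive constants $L,U$ if $L\,\mathrm{dist}(\boldsymbol x,\boldsymbol y)\le\||\boldsymbol A\boldsymbol x|-|\boldsymbol A\boldsymbol y|\|_2\le U\,\mathrm{dist}(\boldsymbol x,\boldsymbol y)$ for all $\boldsymbol x,\boldsymbol y\in\mathcal X$. $\Delta_{1,\eta}(\boldsymbol y)=\operatorname{argmin}_{\boldsymbol z\in\mathbb{F}^n}\{\|\boldsymbol z\|_1:\||\boldsymbol A\boldsymbol z|-\boldsymbol y\|_2\le\eta\}$. *)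

From mathcomp Require Import all_boot all_order all_algebra.
From mathcomp Require Import classical_sets reals.
From mathcomp.real_closed Require Import complex.
Set Implicit Arguments. Unset Strict Implicit. Unset Printing Implicit Defensive.
Import Order.TTheory GRing.Theory Num.Theory.
Local Open Scope ring_scope.

(* Everything is parameterized by the scalar field F and its modulus
   md : F -> R; it is instantiated below only with F = R (md = `|.|)
   and F = R[i] (md = complex modulus normc). *)
Section Defs.
Variables (R : realType) (F : pzRingType) (md : F -> R).

Definition vabs n (u : 'cV[F]_n) : 'cV[R]_n := \col_i md (u i ord0).
Definition norm1 n (u : 'cV[F]_n) : R := \sum_i md (u i ord0).
Definition norm2 n (u : 'cV[F]_n) : R := Num.sqrt (\sum_i md (u i ord0) ^+ 2).
Definition rnorm2 n (v : 'cV[R]_n) : R := Num.sqrt (\sum_i v i ord0 ^+ 2).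
Definition norm0 n (u : 'cV[F]_n) : nat := #|[set i | u i ord0 != 0]|.

(* dist_q(x,y) = min_{|c|=1} ||x - c y||_q  (written as an infimum; the
   minimum is attained by compactness of the unit circle) *)
Definition dist1 n (x y : 'cV[F]_n) : R :=
  inf [set d | exists c : F, md c = 1 /\ d = norm1 (x - c *: y)].
Definition dist2 n (x y : 'cV[F]_n) : R :=
  inf [set d | exists c : F, md c = 1 /\ d = norm2 (x - c *: y)].

Definition sigma1 (k : nat) n (x : 'cV[F]_n) : R :=
  inf [set d | exists z : 'cV[F]_n, (norm0 z <= k)%N /\ d = dist1 x z].

Definition phaseless_biLipschitz m n (A : 'M[F]_(m, n))
    (X : set 'cV[F]_n) (L U : R) :=
  forall x y, X x -> X y ->
    L * dist2 x y <= rnorm2 (vabs (A *m x) - vabs (A *m y)) <= U * dist2 x y.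

Definition in_Delta1 m n (A : 'M[F]_(m, n)) (eta : R) (y : 'cV[R]_m)
    (xs : 'cV[F]_n) :=
  rnorm2 (vabs (A *m xs) - y) <= eta /\
  forall z : 'cV[F]_n, rnorm2 (vabs (A *m z) - y) <= eta -> norm1 xs <= norm1 z.

Definition corollary_claim : Prop :=
  forall (m n k : nat) (r L U : R) (A : 'M[F]_(m, n)),
    (1 <= k <= n)%N -> 0 < r -> 0 < L -> 0 < U ->
    phaseless_biLipschitz A [set x | (norm0 x)%:R <= (r + 4) * k%:R] L U ->
    r > 2 * (U / L) ^+ 2 ->
    let q := 1 - U / L * Num.sqrt (2 / r) in
    let C1 := 2 * (U / L) * ((Num.sqrt r)^-1 + 1) * Num.sqrt (2 + r) / q + 2 in
    let D1 := L^-1 * (2 * Num.sqrt (2 + r) / q) in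
    let C2 := U / L * ((Num.sqrt r)^-1 + 1) * (1 + (Num.sqrt (r / 2))^-1) / q
              + (Num.sqrt r)^-1 + 1 in
    let D2 := L^-1 * (2 * (1 + (Num.sqrt (r / 2))^-1) / q) in
    forall (x : 'cV[F]_n) (eta : R) (e : 'cV[R]_m) (xs : 'cV[F]_n),
      0 <= eta -> rnorm2 e <= eta ->
      in_Delta1 A eta (vabs (A *m x) + e) xs ->
      dist1 xs x <= C1 * sigma1 k x + D1 * Num.sqrt k%:R * eta /\
      dist2 xs x <= C2 * sigma1 k x / Num.sqrt k%:R + D2 * eta.
End Defs.

From mathcomp Require Import all_boot all_order all_algebra.
From mathcomp Require Import classical_sets reals.
From mathcomp.real_closed Require Import complex.
From mathcomp Require Import lra ring zify.
Set Implicit Arguments. Unset Strict Implicit. Unset Printing Implicit Defensive.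
Import Order.TTheory GRing.Theory Num.Theory.
Local Open Scope ring_scope.

(* Let T0 carry the k largest entries of |x|, and let T1 (resp. T2)
   carry the a ~ r k (resp. k) next largest entries of |x#| (resp. |x|) off T0;
   put S = T0 u T1 u T2, a support of size at most (r + 4) k.  Minimality of
   ||x#||_1 gives the cone condition
     ||x#_(T0^c)||_1 <= sqrt k * ||(x# - c x)_S||_2 + ||x_(T0^c)||_1.
   Shelling (cutting T0^c into consecutive blocks of decreasing entries) bounds
   both ||.||_2 and ||A .||_2 of the parts of x# and x off S by their l1 norms
   over T0^c divided by sqrt a, resp. sqrt k.  The lower Lipschitz bound on the
   sparse vectors x#_S and x_S, the reverse triangle inequality for entrywise
   moduli and the tube constraint || |A x#| - |A x| ||_2 <= 2 eta then give
     L d <= 2 eta + U sqrt (2 / r) d + U (r^(-1/2) + 1) sigma_k(x)_1 / sqrt k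
   with d = dist (x#_S, x_S); as U / L * sqrt (2 / r) < 1 this bounds d, and
   both error estimates follow. *)

Section CauchySchwarz.
Variables (R : realDomainType) (I : finType) (P : pred I).
Implicit Types f g : I -> R.

Lemma lagrange_identity f g :
  \sum_(i | P i) \sum_(j | P j) (f i * g j - f j * g i) ^+ 2 =
  2 * ((\sum_(i | P i) f i ^+ 2) * (\sum_(i | P i) g i ^+ 2)
       - (\sum_(i | P i) f i * g i) ^+ 2).
Proof.
have expand i j : (f i * g j - f j * g i) ^+ 2 =
    f i ^+ 2 * g j ^+ 2 + g i ^+ 2 * f j ^+ 2 - 2 * ((f i * g i) * (f j * g j)).
  by ring.
under eq_bigr do under eq_bigr do rewrite expand.
under eq_bigr do rewrite sumrB big_split -!mulr_sumr.
rewrite sumrB big_split /= -!mulr_suml -mulr_sumr -mulr_suml.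
set a := \sum_(i | P i) f i ^+ 2; set b := \sum_(i | P i) g i ^+ 2.
by set c := \sum_(i | P i) f i * g i; ring.
Qed.

Lemma cauchy_schwarz f g :
  (\sum_(i | P i) f i * g i) ^+ 2 <=
  (\sum_(i | P i) f i ^+ 2) * (\sum_(i | P i) g i ^+ 2).
Proof.
have : 0 <= \sum_(i | P i) \sum_(j | P j) (f i * g j - f j * g i) ^+ 2.
  by do 2![apply: sumr_ge0 => ? _]; exact: sqr_ge0.
rewrite lagrange_identity; lra.
Qed.

End CauchySchwarz.

Lemma sum_le_sum_subset (R : numDomainType) (I : finType) (A C : {set I})
    (f : I -> R) :
  (forall i, 0 <= f i) -> A \subset C -> \sum_(i in A) f i <= \sum_(i in C) f i.
Proof.
move=> f_ge0 sAC; rewrite [X in _ <= X](big_setID A) (finset.setIidPr sAC) /= lerDl.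
exact: sumr_ge0.
Qed.

Lemma sumr_setC (R : nmodType) (I : finType) (S : {set I}) (f : I -> R) :
  \sum_i f i = \sum_(i in S) f i + \sum_(i in ~: S) f i.
Proof. by rewrite (bigID (mem S)) /=; congr (_ + _); apply: eq_bigl => i; rewrite inE. Qed.

Section L2Norm.
Variables (R : rcfType) (I : finType).
Implicit Types (f g : I -> R) (x y : R).

Lemma sqrtr_le_of_sqr x y : 0 <= y -> x <= y ^+ 2 -> Num.sqrt x <= y.
Proof.
by move=> y_ge0 /ler_wsqrtr; rewrite sqrtr_sqr ger0_norm.
Qed.

Definition l2norm f := Num.sqrt (\sum_i f i ^+ 2).

Lemma l2norm_ge0 f : 0 <= l2norm f. Proof. exact: sqrtr_ge0. Qed.

Lemma l2norm_sqr f : l2norm f ^+ 2 = \sum_i f i ^+ 2.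
Proof. by rewrite sqr_sqrtr // sumr_ge0 // => i _; exact: sqr_ge0. Qed.

Lemma l2norm_abs f : l2norm (fun i => `|f i|) = l2norm f.
Proof. by congr Num.sqrt; apply: eq_bigr => i _; rewrite real_normK ?num_real. Qed.

Lemma l2normD f g : l2norm (fun i => f i + g i) <= l2norm f + l2norm g.
Proof.
apply: sqrtr_le_of_sqr; first by rewrite addr_ge0 ?l2norm_ge0.
have cs : \sum_i f i * g i <= l2norm f * l2norm g.
  have := cauchy_schwarz predT f g; rewrite -!l2norm_sqr -exprMn => /ler_wsqrtr.
  rewrite !sqrtr_sqr [X in _ <= X]ger0_norm ?mulr_ge0 ?l2norm_ge0 //.
  exact: le_trans (ler_norm _).
have -> : \sum_i (f i + g i) ^+ 2 =
    \sum_i f i ^+ 2 + \sum_i g i ^+ 2 + 2 * \sum_i f i * g i.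
  by rewrite mulr_sumr -!big_split; apply: eq_bigr => i _ /=; ring.
rewrite -!l2norm_sqr; nra.
Qed.

Lemma ler_l2norm f g : (forall i, `|f i| <= g i) -> l2norm f <= l2norm g.
Proof.
move=> le_fg; apply: ler_wsqrtr; apply: ler_sum => i _.
by have := le_fg i; rewrite ler_norml => /andP[? ?]; nra.
Qed.

Lemma sum_le_sqrt_card (S : {set I}) f :
  \sum_(i in S) f i <= Num.sqrt #|S|%:R * Num.sqrt (\sum_(i in S) f i ^+ 2).
Proof.
rewrite -sqrtrM ?ler0n //; apply: le_trans (ler_norm _) _.
rewrite -sqrtr_sqr; apply: ler_wsqrtr.
have := cauchy_schwarz (mem S) f (fun=> 1).
by under eq_bigr do rewrite mulr1; rewrite sumr_const expr1n; rewrite mulrC.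
Qed.

Lemma sum_sqr_le_max (W : {set I}) f M : (forall i, i \in W -> 0 <= f i <= M) ->
  \sum_(i in W) f i ^+ 2 <= M * \sum_(i in W) f i.
Proof.
move=> bnd; rewrite mulr_sumr; apply: ler_sum => i iW.
by have /andP[? ?] := bnd i iW; nra.
Qed.

End L2Norm.

Section TopSets.
Variable I : finType.

Lemma exists_set_card_between (Z W : {set I}) m :
  Z \subset W -> (#|Z| <= m <= #|W|)%N ->
  exists T : {set I}, [/\ Z \subset T, T \subset W & #|T| = m].
Proof.
move Hd : (m - #|Z|)%N => d; elim: d Z Hd => [|d IH] Z Hd ZW /andP[Zm mW].
  by exists Z; split => //; lia.
have /set0Pn [j] : W :\: Z != finset.set0.
  by rewrite finset.setD_eq0; apply: contraTN mW => /subset_leq_card; lia.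
rewrite inE => /andP[jZ jW].
have [|||T [ZT TW cT]] := IH (j |: Z).
- by rewrite cardsU1 jZ; lia.
- by rewrite finset.subUset finset.sub1set jW ZW.
- by rewrite cardsU1 jZ mW; lia.
by exists T; split => //; apply: fintype.subset_trans ZT; exact: finset.subsetUr.
Qed.

Variable R : realDomainType.
Implicit Types (f : I -> R) (W T : {set I}).

Definition top_set f W (a : nat) T :=
  [/\ T \subset W, #|T| = minn a #|W| &
      forall i j, i \in W -> i \notin T -> j \in T -> f i <= f j].

Lemma exists_top_set f W (a : nat) :
  exists2 T, top_set f W a T &
    forall T', T' \subset W -> #|T'| = #|T| ->
      \sum_(i in T') f i <= \sum_(i in T) f i.
Proof.
pose P T := (T \subset W) && (#|T| == minn a #|W|).
have [T0 [_ T0W cT0]] :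
    exists T, [/\ finset.set0 \subset T, T \subset W & #|T| = minn a #|W|].
  by apply: exists_set_card_between; rewrite ?finset.sub0set // cards0 geq_minr.
have PT0 : P T0 by rewrite /P T0W cT0 eqxx.
case: (arg_maxP (fun T => \sum_(i in T) f i) PT0) => T /andP[TW /eqP cT] Tmax.
exists T; last by move=> T' T'W cT'; apply: Tmax; rewrite /P T'W cT' cT eqxx.
split=> // i j iW iT jT.
have /Tmax : P (i |: (T :\ j)).
  rewrite /P finset.subUset finset.sub1set iW (fintype.subset_trans (subD1set _ _)) //=.
  by rewrite cardsU1 in_setD1 (negbTE iT) andbF /= -cT (cardsD1 j T) jT; lia.
rewrite big_setU1 /=; last by rewrite in_setD1 (negbTE iT) andbF.
by rewrite [X in _ <= X](big_setD1 j) //=; lra.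
Qed.

Lemma top_set_le_sum f W (a : nat) T i : top_set f W a T ->
  i \in W -> i \notin T -> a%:R * f i <= \sum_(j in T) f j.
Proof.
move=> [TW cT top] iW iT.
have TW_lt : (#|T| < #|W|)%N.
  by apply: proper_card; rewrite finset.properEneq TW andbT; apply: contraNneq iT => ->.
have -> : a = #|T| by move: TW_lt; rewrite cT; lia.
rewrite mulr_natl -sumr_const; apply: ler_sum => j jT; exact: top.
Qed.

End TopSets.

Lemma top_set_le_avg (R : realFieldType) (I : finType) (f : I -> R) W (a : nat) T i :
  (0 < a)%N -> top_set f W a T -> i \in W :\: T -> f i <= (\sum_(j in T) f j) / a%:R.
Proof.
move=> a_gt0 Ttop; rewrite inE => /andP[iT iW].
by rewrite ler_pdivlMr ?ltr0n // mulrC; exact: top_set_le_sum Ttop iW iT.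
Qed.

Section RecoveryArithmetic.
Variable R : rcfType.
Implicit Types r L U k a eta sig tl Z d t w rho sk sa sr : R.

Lemma cone_ratio_le sr sk sa d tl Z : 0 < sr -> 0 < sk -> sr * sk <= sa ->
  0 <= d -> 0 <= tl -> Z <= sk * d + tl -> Z / sa <= sr^-1 * (d + tl / sk).
Proof.
move=> sr_gt0 sk_gt0 le_sa d_ge0 tl_ge0 hZ.
have sa_gt0 : 0 < sa := lt_le_trans (mulr_gt0 sr_gt0 sk_gt0) le_sa.
apply: (@le_trans _ _ ((sk * d + tl) / sa)); first by rewrite ler_pM2r ?invr_gt0.
apply: (@le_trans _ _ ((sk * d + tl) / (sr * sk))).
  apply: ler_wpM2l; first by rewrite addr_ge0 // mulr_ge0 // ltW.
  by rewrite lef_pV2 ?posrE ?mulr_gt0.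
by rewrite le_eqVlt; apply/orP; left; apply/eqP; field; rewrite !gt_eqF.
Qed.

Lemma robust_null_space_le L U w rho sk eta sig tl d t :
  0 < L - U * w -> 0 <= U -> 0 <= rho <= w -> 0 < sk -> 0 <= d -> tl <= sig ->
  L * d <= 2 * eta + U * t + U * (tl / sk) -> t <= rho * (d + tl / sk) ->
  d <= (2 * eta + U * (rho + 1) * (sig / sk)) / (L - U * w).
Proof.
move=> q_gt0 U_ge0 /andP[rho_ge0 le_rho] sk_gt0 d_ge0 le_sig h1 ht.
rewrite ler_pdivlMr //.
have le_tl : tl / sk <= sig / sk by rewrite ler_pM2r ?invr_gt0.
have h2 : rho * (d + tl / sk) <= w * d + rho * (sig / sk).
  by rewrite mulrDr; apply: lerD; [exact: ler_wpM2r | exact: ler_wpM2l].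
have := ler_wpM2l U_ge0 (le_trans ht h2).
have := ler_wpM2l U_ge0 le_tl.
lra.
Qed.

Lemma ratio_condition_bounds r L U : 0 < L <= U -> 2 * (U / L) ^+ 2 < r ->
  [/\ 2 <= r, (Num.sqrt r)^-1 <= Num.sqrt (2 / r) & 0 < L - U * Num.sqrt (2 / r)].
Proof.
move=> /andP[L_gt0 LU] hr.
have u_ge1 : 1 <= U / L by rewrite ler_pdivlMr // mul1r.
have r_ge2 : 2 <= r by apply: le_trans (ltW hr); nra.
have r_gt0 : 0 < r by lra.
have r_ge0 : 0 <= r by lra.
split=> //.
  rewrite -(sqrtrV r_ge0) ler_sqrt ?divr_ge0 //.
  by rewrite ler_pdivlMr // mulVf ?gt_eqF //; lra.
set w := Num.sqrt (2 / r).
have uw_lt1 : (U / L * w) ^+ 2 < 1.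
  by rewrite exprMn sqr_sqrtr ?divr_ge0 // mulrA ltr_pdivrMr // mul1r mulrC.
have -> : L - U * w = L * (1 - U / L * w) by field; rewrite gt_eqF.
rewrite pmulr_rgt0 // subr_gt0 ltNge; apply: contraTN uw_lt1 => /(exprn_ege1 2).
by rewrite leNgt.
Qed.

Section ErrorConstants.
Variables (L U w rho sk eta sig d : R).
Hypotheses (L_gt0 : 0 < L) (q_gt0 : 0 < L - U * w) (U_ge0 : 0 <= U) (w_ge0 : 0 <= w)
  (rho_ge0 : 0 <= rho) (sk_gt0 : 0 < sk) (eta_ge0 : 0 <= eta) (sig_ge0 : 0 <= sig).
Hypothesis hd : d <= (2 * eta + U * (rho + 1) * (sig / sk)) / (L - U * w).

Lemma l1_error_le v : 2 <= v ->
  2 * sk * d + 2 * sig <=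
  (2 * (U / L) * (rho + 1) * v / (1 - U / L * w) + 2) * sig +
  L^-1 * (2 * v / (1 - U / L * w)) * sk * eta.
Proof.
move=> v_ge2; have D_neq0 : L - U * w != 0 by rewrite gt_eqF.
apply: le_trans (_ : 2 * sk * ((2 * eta + U * (rho + 1) * (sig / sk)) / (L - U * w))
  + 2 * sig <= _); first by rewrite lerD2r ler_wpM2l // mulr_ge0 // ltW.
have -> : 2 * sk * ((2 * eta + U * (rho + 1) * (sig / sk)) / (L - U * w)) =
    (4 * (sk * eta) + 2 * (U * (rho + 1) * sig)) / (L - U * w).
  by field; rewrite D_neq0 gt_eqF.
have -> : (2 * (U / L) * (rho + 1) * v / (1 - U / L * w) + 2) * sig +
    L^-1 * (2 * v / (1 - U / L * w)) * sk * eta =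
    (2 * v * (sk * eta) + 2 * v * (U * (rho + 1) * sig)) / (L - U * w) + 2 * sig.
  by field; rewrite D_neq0 gt_eqF.
rewrite lerD2r ler_pM2r ?invr_gt0 //.
have := mulr_ge0 (ltW sk_gt0) eta_ge0.
have : 0 <= U * (rho + 1) * sig by rewrite !mulr_ge0 ?addr_ge0.
nra.
Qed.

Lemma l2_error_le :
  (1 + w) * d + (rho + 1) * (sig / sk) <=
  (U / L * (rho + 1) * (1 + w) / (1 - U / L * w) + rho + 1) * sig / sk +
  L^-1 * (2 * (1 + w) / (1 - U / L * w)) * eta.
Proof.
apply: le_trans (_ : (1 + w) * ((2 * eta + U * (rho + 1) * (sig / sk)) / (L - U * w))
  + (rho + 1) * (sig / sk) <= _); first by rewrite lerD2r ler_wpM2l // addr_ge0.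
by rewrite le_eqVlt; apply/orP; left; apply/eqP; field; rewrite !gt_eqF.
Qed.

End ErrorConstants.

Lemma error_bounds_of_estimates r L U k a eta sig tl Z d e1 e2 :
  1 <= k -> 0 < L <= U -> 2 * (U / L) ^+ 2 < r -> r * k <= a ->
  0 <= eta -> 0 <= tl <= sig -> 0 <= d ->
  Z <= Num.sqrt k * d + tl ->
  L * d <= 2 * eta + U * (Z / Num.sqrt a) + U * (tl / Num.sqrt k) ->
  e1 <= 2 * Num.sqrt k * d + 2 * tl ->
  e2 <= d + Z / Num.sqrt a + tl / Num.sqrt k ->
  let q := 1 - U / L * Num.sqrt (2 / r) in
  let C1 := 2 * (U / L) * ((Num.sqrt r)^-1 + 1) * Num.sqrt (2 + r) / q + 2 in
  let D1 := L^-1 * (2 * Num.sqrt (2 + r) / q) in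
  let C2 := U / L * ((Num.sqrt r)^-1 + 1) * (1 + (Num.sqrt (r / 2))^-1) / q
            + (Num.sqrt r)^-1 + 1 in
  let D2 := L^-1 * (2 * (1 + (Num.sqrt (r / 2))^-1) / q) in
  e1 <= C1 * sig + D1 * Num.sqrt k * eta /\
  e2 <= C2 * sig / Num.sqrt k + D2 * eta.
Proof.
move=> k_ge1 LU hr ra eta_ge0 /andP[tl_ge0 le_sig] d_ge0 hZ h1 he1 he2; cbv zeta.
have [r_ge2 rho_le_w q_gt0] := ratio_condition_bounds LU hr.
have [L_gt0 U_gt0] : 0 < L /\ 0 < U by case/andP: LU => L_gt0 /(lt_le_trans L_gt0).
have r_gt0 : 0 < r by lra.
have r_ge0 : 0 <= r by lra.
have -> : (Num.sqrt (r / 2))^-1 = Num.sqrt (2 / r).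
  by rewrite -sqrtrV ?divr_ge0 // invf_div.
set w := Num.sqrt (2 / r) in rho_le_w q_gt0 *; set sk := Num.sqrt k.
set rho := (Num.sqrt r)^-1 in rho_le_w *.
have sk_gt0 : 0 < sk by rewrite sqrtr_gt0; lra.
have w_ge0 : 0 <= w := sqrtr_ge0 _.
have rho_ge0 : 0 <= rho by rewrite invr_ge0 sqrtr_ge0.
have a_ge0 : 0 <= a by apply: le_trans ra; rewrite mulr_ge0 //; lra.
have le_sa : Num.sqrt r * sk <= Num.sqrt a by rewrite -sqrtrM // ler_sqrt.
have sr_gt0 : 0 < Num.sqrt r by rewrite sqrtr_gt0.
have ht := cone_ratio_le sr_gt0 sk_gt0 le_sa d_ge0 tl_ge0 hZ.
have U_ge0 : 0 <= U by lra.
have hd := robust_null_space_le q_gt0 U_ge0 (introT andP (conj rho_ge0 rho_le_w))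
  sk_gt0 d_ge0 le_sig h1 ht.
have sig_ge0 : 0 <= sig by lra.
have v_ge2 : 2 <= Num.sqrt (2 + r).
  by rewrite -[X in X <= _](ger0_norm (ler0n _ 2)) -sqrtr_sqr ler_sqrt; lra.
split.
- apply: le_trans he1 _; apply: le_trans (_ : _ <= 2 * sk * d + 2 * sig) _.
    by rewrite lerD2l; lra.
  exact: l1_error_le.
- apply: le_trans he2 _; apply: le_trans (_ : _ <= (1 + w) * d + (rho + 1) * (sig / sk)) _;
    last exact: l2_error_le.
  have le_tl_sk : tl / sk <= sig / sk by rewrite ler_pM2r ?invr_gt0.
  have := ler_wpM2r d_ge0 rho_le_w; have := ler_wpM2l rho_ge0 le_tl_sk.
  by move: ht; rewrite -/rho; lra.
Qed.

End RecoveryArithmetic.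

Lemma exists_block_size (R : archiRealFieldType) (r : R) (k : nat) :
  0 < r -> (0 < k)%N ->
  exists a : nat,
    [/\ (0 < a)%N, r * k%:R <= a%:R & (2 * k + a)%:R <= (r + 4) * k%:R].
Proof.
move=> r_gt0 k_gt0; have rk_ge0 : 0 <= r * k%:R by rewrite mulr_ge0 // ltW.
have /andP[lo hi] := truncn_itv rk_ge0.
exists (Num.truncn (r * k%:R)).+1; split => //; first exact: ltW.
have k_ge1 : 1 <= k%:R :> R by rewrite ler1n.
rewrite natrD natrM -natr1; lra.
Qed.

Section Modulus.
Variables (R : realType) (F : pzRingType) (md : F -> R).
Hypotheses (md0 : md 0 = 0) (mdN : forall a, md (- a) = md a)
  (mdD : forall a b, md (a + b) <= md a + md b)
  (mdM : forall a b, md (a * b) = md a * md b)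
  (md_ge0 : forall a, 0 <= md a) (md1 : md 1 = 1).

Lemma norm1_ge0 n (v : 'cV[F]_n) : 0 <= norm1 md v.
Proof. exact: sumr_ge0. Qed.

Lemma norm2_ge0 n (v : 'cV[F]_n) : 0 <= norm2 md v.
Proof. exact: sqrtr_ge0. Qed.

Lemma norm2D n (u v : 'cV[F]_n) : norm2 md (u + v) <= norm2 md u + norm2 md v.
Proof.
apply: le_trans (l2normD _ _); apply: ler_l2norm => i.
by rewrite mxE ger0_norm.
Qed.

Lemma norm2N n (v : 'cV[F]_n) : norm2 md (- v) = norm2 md v.
Proof. by congr Num.sqrt; apply: eq_bigr => i _; rewrite mxE mdN. Qed.

Lemma norm2Z n c (v : 'cV[F]_n) : md c = 1 -> norm2 md (c *: v) = norm2 md v.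
Proof.
by move=> c1; congr Num.sqrt; apply: eq_bigr => i _; rewrite mxE mdM c1 mul1r.
Qed.

Lemma rnorm2D n (u v : 'cV[R]_n) : rnorm2 (u + v) <= rnorm2 u + rnorm2 v.
Proof.
have -> : rnorm2 (u + v) = l2norm (fun i => u i ord0 + v i ord0).
  by congr Num.sqrt; apply: eq_bigr => i _; rewrite mxE.
exact: l2normD.
Qed.

Lemma rnorm2N n (v : 'cV[R]_n) : rnorm2 (- v) = rnorm2 v.
Proof. by congr Num.sqrt; apply: eq_bigr => i _; rewrite mxE sqrrN. Qed.

Lemma norm0_0 n : norm0 (0 : 'cV[F]_n) = 0%N.
Proof. by apply/eqP; rewrite cards_eq0; apply/eqP/setP => i; rewrite !inE mxE eqxx. Qed.

Lemma norm0_delta n (i : 'I_n) : (norm0 (delta_mx i ord0 : 'cV[F]_n) <= 1)%N.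
Proof.
apply: (@leq_trans #|[set i]%SET|); last by rewrite cards1.
apply: subset_leq_card; apply/fintype.subsetP => j.
by rewrite !inE mxE; case: (j == i); rewrite ?eqxx.
Qed.

Definition restrict n (S : {set 'I_n}) (v : 'cV[F]_n) : 'cV[F]_n :=
  \col_i (if i \in S then v i ord0 else 0).

Lemma restrictBZ n (S : {set 'I_n}) (u v : 'cV[F]_n) c :
  restrict S (u - c *: v) = restrict S u - c *: restrict S v.
Proof.
by apply/matrixP => i j; rewrite !mxE; case: (i \in S); rewrite ?mulr0 ?subr0.
Qed.

Lemma restrict_setD n (W T : {set 'I_n}) (v : 'cV[F]_n) : T \subset W ->
  restrict W v = restrict T v + restrict (W :\: T) v.
Proof.
move=> /fintype.subsetP TW; apply/matrixP => i j; rewrite !mxE inE.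
case: (boolP (i \in T)) => [/TW -> | _] /=; last by rewrite add0r.
by rewrite addr0.
Qed.

Lemma restrict_addC n (S : {set 'I_n}) (v : 'cV[F]_n) :
  restrict S v + restrict (~: S) v = v.
Proof.
by apply/matrixP => i j; rewrite (ord1 j) !mxE inE; case: (i \in S); rewrite ?addr0 ?add0r.
Qed.

Lemma norm2_restrict n (S : {set 'I_n}) (v : 'cV[F]_n) :
  norm2 md (restrict S v) = Num.sqrt (\sum_(i in S) md (v i ord0) ^+ 2).
Proof.
rewrite /norm2 [in RHS]big_mkcond; congr Num.sqrt; apply: eq_bigr => i _.
by rewrite mxE; case: (i \in S); rewrite ?md0 ?expr0n.
Qed.

Lemma norm0_restrict n (S : {set 'I_n}) (v : 'cV[F]_n) :
  (norm0 (restrict S v) <= #|S|)%N.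
Proof.
apply: subset_leq_card; apply/fintype.subsetP => i; rewrite inE mxE.
by case: (i \in S); rewrite ?eqxx.
Qed.

Lemma dist2_le n (x y : 'cV[F]_n) c : md c = 1 -> dist2 md x y <= norm2 md (x - c *: y).
Proof.
move=> c1; apply: ge_inf; last by exists c.
by exists 0 => _ [? [_ ->]]; exact: norm2_ge0.
Qed.

Lemma le_dist2 n (x y : 'cV[F]_n) t :
  (forall c, md c = 1 -> t <= norm2 md (x - c *: y)) -> t <= dist2 md x y.
Proof.
move=> lb; apply: lb_le_inf; first by exists (norm2 md (x - 1 *: y)), 1.
by move=> _ [c [c1 ->]]; exact: lb.
Qed.

Lemma dist1_le n (x y : 'cV[F]_n) c : md c = 1 -> dist1 md x y <= norm1 md (x - c *: y).
Proof.
move=> c1; apply: ge_inf; last by exists c.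
by exists 0 => _ [? [_ ->]]; exact: norm1_ge0.
Qed.

Lemma le_dist1 n (x y : 'cV[F]_n) t :
  (forall c, md c = 1 -> t <= norm1 md (x - c *: y)) -> t <= dist1 md x y.
Proof.
move=> lb; apply: lb_le_inf; first by exists (norm1 md (x - 1 *: y)), 1.
by move=> _ [c [c1 ->]]; exact: lb.
Qed.

Lemma le_sigma1 k n (x : 'cV[F]_n) t :
  (forall z c, (norm0 z <= k)%N -> md c = 1 -> t <= norm1 md (x - c *: z)) ->
  t <= sigma1 md k x.
Proof.
move=> lb; apply: lb_le_inf; first by exists (dist1 md x 0), 0; rewrite norm0_0.
by move=> _ [z [zk ->]]; apply: le_dist1 => c c1; exact: lb.
Qed.

Lemma dist2_ge0 n (x y : 'cV[F]_n) : 0 <= dist2 md x y.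
Proof. by apply: le_dist2 => c _; exact: norm2_ge0. Qed.

Lemma dist2_0 n (w : 'cV[F]_n) : dist2 md w 0 = norm2 md w.
Proof.
apply/le_anti/andP; split; last by apply: le_dist2 => c _; rewrite scaler0 subr0.
by have := dist2_le w 0 md1; rewrite scaler0 subr0.
Qed.

Lemma vabs0 m : vabs md (0 : 'cV[F]_m) = 0.
Proof. by apply/matrixP => i j; rewrite !mxE md0. Qed.

Lemma md_sub_le (p q s t : F) :
  `|md p - md s| <= `|md (p + q) - md (s + t)| + md q + md t.
Proof.
have := mdD (p + q) (- q); have := mdD (s + t) (- t).
have := mdD p q; have := mdD s t; rewrite !addrK !mdN.
have := ler_norm (md (p + q) - md (s + t)).
have := ler_norm (- (md (p + q) - md (s + t))); rewrite normrN.
by rewrite ler_norml; lra.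
Qed.

Lemma rnorm2_vabs_sub_le m (P Q S T : 'cV[F]_m) :
  rnorm2 (vabs md P - vabs md S) <=
  rnorm2 (vabs md (P + Q) - vabs md (S + T)) + rnorm2 (vabs md Q) + rnorm2 (vabs md T).
Proof.
rewrite /rnorm2 -[X in _ <= X + _ + _]l2norm_abs.
apply: le_trans (lerD (l2normD _ _) (lexx _)); apply: le_trans (l2normD _ _).
by apply: ler_l2norm => i; rewrite !mxE; exact: md_sub_le.
Qed.

Definition Anorm m n (A : 'M[F]_(m, n)) (v : 'cV[F]_n) := rnorm2 (vabs md (A *m v)).

Lemma AnormD m n (A : 'M[F]_(m, n)) u v : Anorm A (u + v) <= Anorm A u + Anorm A v.
Proof.
apply: le_trans (l2normD _ _); apply: ler_l2norm => i.
by rewrite mulmxDr !mxE ger0_norm //; exact: mdD.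
Qed.

Lemma phaseless_biLipschitz_sub m n (A : 'M[F]_(m, n)) (X Y : set 'cV[F]_n) L U :
  (X `<=` Y)%classic -> phaseless_biLipschitz md A Y L U ->
  phaseless_biLipschitz md A X L U.
Proof. by move=> XY hY x y /XY Xx /XY Xy; exact: hY. Qed.

Lemma phaseless_biLipschitz_Anorm m n (A : 'M[F]_(m, n)) X L U w :
  phaseless_biLipschitz md A X L U -> X 0 -> X w -> Anorm A w <= U * norm2 md w.
Proof.
move=> hA X0 Xw; have /andP[_] := hA w 0 Xw X0.
by rewrite mulmx0 vabs0 subr0 dist2_0.
Qed.

Lemma phaseless_biLipschitz_le m n (A : 'M[F]_(m, n)) X L U (i : 'I_n) :
  phaseless_biLipschitz md A X L U -> X 0 -> X (delta_mx i ord0) -> L <= U.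
Proof.
move=> hA X0 Xe; have /andP[lo up] := hA _ 0 Xe X0.
have e_norm : dist2 md (delta_mx i ord0 : 'cV[F]_n) 0 = 1.
  rewrite dist2_0 /norm2 (bigD1 i) //= big1 => [|j ji]; rewrite !mxE ?eqxx.
    by rewrite md1 expr1n addr0 sqrtr1.
  by rewrite (negbTE ji) md0 expr0n.
by move: (le_trans lo up); rewrite e_norm !mulr1.
Qed.

Lemma sum_compl_le_sigma1 k n (x : 'cV[F]_n) (T0 : {set 'I_n}) :
  (k <= n)%N -> #|T0| = k ->
  (forall T : {set 'I_n}, #|T| = k ->
     \sum_(i in T) md (x i ord0) <= \sum_(i in T0) md (x i ord0)) ->
  \sum_(i in ~: T0) md (x i ord0) <= sigma1 md k x.
Proof.
move=> kn T0k T0max; apply: le_sigma1 => z c zk c1.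
have [T [suppT _ Tk]] :
    exists T : {set 'I_n}, [/\ [set i | z i ord0 != 0]%SET \subset T,
      T \subset [set: 'I_n]%SET & #|T| = k].
  by apply: exists_set_card_between; rewrite ?finset.subsetT // zk cardsT card_ord.
have tail_le : \sum_(i in ~: T) md (x i ord0) <= norm1 md (x - c *: z).
  rewrite /norm1 (sumr_setC T) -[X in X <= _]add0r lerD ?sumr_ge0 //.
  apply: ler_sum => i; rewrite inE => iT.
  have : i \notin [set i | z i ord0 != 0]%SET.
    by apply: contra iT; exact: (fintype.subsetP suppT).
  by rewrite inE negbK => /eqP zi0; rewrite !mxE zi0 mulr0 subr0.
have := T0max T Tk; have := sumr_setC T0 (fun i => md (x i ord0)).
have := sumr_setC T (fun i => md (x i ord0)); lra.
Qed.

Section Shelling.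
Variables (m n b : nat) (A : 'M[F]_(m, n)) (U : R).
Hypotheses (U_ge0 : 0 <= U) (b_gt0 : (0 < b)%N)
  (hU : forall w, (norm0 w <= b)%N -> Anorm A w <= U * norm2 md w).

Lemma Anorm_restrict_small (v : 'cV[F]_n) (W : {set 'I_n}) M :
  (#|W| <= b)%N -> 0 <= M -> (forall i, i \in W -> md (v i ord0) <= M) ->
  Anorm A (restrict W v) <= U * (Num.sqrt b%:R * M).
Proof.
move=> Wb M_ge0 bnd.
apply: le_trans (hU (leq_trans (norm0_restrict _ _) Wb)) _; apply: ler_wpM2l => //.
rewrite norm2_restrict; apply: sqrtr_le_of_sqr; first by rewrite mulr_ge0 ?sqrtr_ge0.
rewrite exprMn sqr_sqrtr ?ler0n //; apply: le_trans (_ : #|W|%:R * M ^+ 2 <= _).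
  rewrite mulr_natl -sumr_const; apply: ler_sum => i iW.
  by have := bnd i iW; have := md_ge0 (v i ord0); nra.
by rewrite ler_wpM2r ?sqr_ge0 // ler_nat.
Qed.

(* Shelling: split [W] into the [b] largest entries of [v] and the rest, and
   recurse on the rest, whose entries are bounded by the average over the
   first block. *)
Lemma Anorm_restrict_le (v : 'cV[F]_n) (W : {set 'I_n}) M : 0 <= M ->
  (forall i, i \in W -> md (v i ord0) <= M) ->
  Anorm A (restrict W v) <=
  U * (Num.sqrt b%:R * M + (\sum_(i in W) md (v i ord0)) / Num.sqrt b%:R).
Proof.
have sb_gt0 : 0 < Num.sqrt (b%:R : R) by rewrite sqrtr_gt0 ltr0n.
have tail_ge0 W' : 0 <= (\sum_(i in W') md (v i ord0)) / Num.sqrt b%:R.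
  by rewrite divr_ge0 ?sumr_ge0 // ltW.
have [s] := ubnP #|W|; elim: s => // s IH in W M *; move=> Ws M_ge0 bnd.
have [Wb|bW] := leqP #|W| b.
  by apply: le_trans (Anorm_restrict_small Wb M_ge0 bnd) _; rewrite ler_wpM2l // lerDl.
have [T Ttop _] := exists_top_set (fun i => md (v i ord0)) W b.
have [TW cT _] := Ttop.
have cTb : #|T| = b by rewrite cT; apply/minn_idPl; exact: ltnW.
pose M' := (\sum_(j in T) md (v j ord0)) / b%:R.
have M'_ge0 : 0 <= M' by rewrite divr_ge0 ?sumr_ge0.
have bnd' i : i \in W :\: T -> md (v i ord0) <= M' := top_set_le_avg b_gt0 Ttop.
have hT := Anorm_restrict_small (eq_leq cTb) M_ge0
  (fun i iT => bnd i (fintype.subsetP TW i iT)).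
have WT_s : (#|W :\: T| < s)%N by rewrite cardsD (finset.setIidPr TW) cTb; lia.
have hWT := IH (W :\: T) M' WT_s M'_ge0 bnd'.
have M'E : Num.sqrt b%:R * M' = (\sum_(j in T) md (v j ord0)) / Num.sqrt b%:R.
  by rewrite /M' -{2}(sqr_sqrtr (ler0n _ b)); field; rewrite gt_eqF.
rewrite M'E in hWT.
rewrite (restrict_setD v TW) (big_setID T) (finset.setIidPr TW) /= mulrDl.
apply: le_trans (AnormD _ _ _) _; move: hT hWT; lra.
Qed.

Section TopTail.
Variables (v : 'cV[F]_n) (W T V : {set 'I_n}).
Hypotheses (Ttop : top_set (fun i => md (v i ord0)) W b T) (VWT : V \subset W :\: T).

Let sW := \sum_(i in W) md (v i ord0).
Let sT := \sum_(i in T) md (v i ord0).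

Lemma top_set_tail_le i : i \in V -> md (v i ord0) <= sT / b%:R.
Proof.
by move=> /(fintype.subsetP VWT); exact: top_set_le_avg.
Qed.

Lemma top_set_tail_sum : sT + \sum_(i in V) md (v i ord0) <= sW.
Proof.
have [TW _ _] := Ttop.
rewrite /sW [X in _ <= X](big_setID T) (finset.setIidPr TW) lerD2l.
exact: sum_le_sum_subset.
Qed.

Lemma norm2_restrict_tail : norm2 md (restrict V v) <= sW / Num.sqrt b%:R.
Proof.
have sT_ge0 : 0 <= sT := sumr_ge0 _ (fun i _ => md_ge0 _).
have sV_ge0 : 0 <= \sum_(i in V) md (v i ord0) := sumr_ge0 _ (fun i _ => md_ge0 _).
rewrite norm2_restrict; apply: sqrtr_le_of_sqr.
  by rewrite divr_ge0 ?sqrtr_ge0 // sumr_ge0.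
apply: le_trans (sum_sqr_le_max (M := sT / b%:R) _) _.
  by move=> i iV; rewrite md_ge0 top_set_tail_le.
rewrite expr_div_n sqr_sqrtr ?ler0n // mulrAC ler_pM2r ?invr_gt0 ?ltr0n //.
by have := top_set_tail_sum; nra.
Qed.

Lemma Anorm_restrict_tail : Anorm A (restrict V v) <= U * (sW / Num.sqrt b%:R).
Proof.
have sb_gt0 : 0 < Num.sqrt (b%:R : R) by rewrite sqrtr_gt0 ltr0n.
apply: le_trans (Anorm_restrict_le _ top_set_tail_le) _.
  by rewrite divr_ge0 ?sumr_ge0.
rewrite ler_wpM2l //.
have -> : Num.sqrt b%:R * (sT / b%:R) = sT / Num.sqrt b%:R.
  by rewrite -{2}(sqr_sqrtr (ler0n R b)); field; rewrite gt_eqF.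
by rewrite -mulrDl ler_pM2r ?invr_gt0 // top_set_tail_sum.
Qed.

End TopTail.

End Shelling.

Section Estimates.
Variables (m n k a : nat) (L U eta : R) (A : 'M[F]_(m, n)) (x xs : 'cV[F]_n).
Variables (T0 T1 T2 : {set 'I_n}).
Hypotheses (k_gt0 : (0 < k)%N) (a_gt0 : (0 < a)%N) (U_ge0 : 0 <= U).
Hypothesis hA : phaseless_biLipschitz md A [set w | (norm0 w <= 2 * k + a)%N] L U.
Hypotheses (tube : rnorm2 (vabs md (A *m xs) - vabs md (A *m x)) <= 2 * eta)
  (norm1_le : norm1 md xs <= norm1 md x).
Hypotheses (T0k : #|T0| = k)
  (T1top : top_set (fun i => md (xs i ord0)) (~: T0) a T1)
  (T2top : top_set (fun i => md (x i ord0)) (~: T0) k T2).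

Local Notation S := (T0 :|: T1 :|: T2).
Local Notation tl := (\sum_(i in ~: T0) md (x i ord0)).
Local Notation tls := (\sum_(i in ~: T0) md (xs i ord0)).
Local Notation d := (dist2 md (restrict S xs) (restrict S x)).
Local Notation sk := (Num.sqrt (k%:R : R)).

Lemma card_S_le : (#|S| <= 2 * k + a)%N.
Proof.
have [_ cT1 _] := T1top; have [_ cT2 _] := T2top.
have T01 : (#|T0 :|: T1| <= k + a)%N.
  by apply: leq_trans (leq_card_setU T0 T1) _; rewrite T0k cT1 leq_add2l geq_minl.
have T2k : (#|T2| <= k)%N by rewrite cT2 geq_minl.
apply: leq_trans (leq_card_setU _ _) _.
by rewrite mul2n -addnn -addnA addnC leq_add.
Qed.

Lemma sparse_Anorm_le w : (norm0 w <= 2 * k + a)%N -> Anorm A w <= U * norm2 md w.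
Proof.
by apply: phaseless_biLipschitz_Anorm hA _; rewrite /= norm0_0.
Qed.

Lemma head_norm1_le c :
  \sum_(i in T0) md ((xs - c *: x) i ord0) <=
  sk * norm2 md (restrict S xs - c *: restrict S x).
Proof.
apply: le_trans (sum_le_sqrt_card _ _) _; rewrite T0k ler_wpM2l ?sqrtr_ge0 //.
rewrite -restrictBZ norm2_restrict ler_sqrt ?sumr_ge0 //; last by move=> *; exact: sqr_ge0.
apply: sum_le_sum_subset => [i|]; first exact: sqr_ge0.
by rewrite -finset.setUA finset.subsetUl.
Qed.

Lemma tail_le_cone_norm2 c : md c = 1 ->
  tls <= sk * norm2 md (restrict S xs - c *: restrict S x) + tl.
Proof.
move=> c1; have := head_norm1_le c.
have : \sum_(i in T0) md (x i ord0) <=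
    \sum_(i in T0) md (xs i ord0) + \sum_(i in T0) md ((xs - c *: x) i ord0).
  rewrite -big_split; apply: ler_sum => i _ /=.
  have := mdD (xs i ord0) (- (xs - c *: x) i ord0).
  by rewrite !mxE mdN opprB addrCA subrr addr0 mdM c1 mul1r.
move: norm1_le; rewrite /norm1 (sumr_setC T0) [X in _ <= X](sumr_setC T0); lra.
Qed.

Lemma tail_le_cone : tls <= sk * d + tl.
Proof.
have sk_gt0 : 0 < sk by rewrite sqrtr_gt0 ltr0n.
suff : (tls - tl) / sk <= d by rewrite ler_pdivrMr // mulrC; lra.
apply: le_dist2 => c c1; rewrite ler_pdivrMr // mulrC.
by have := tail_le_cone_norm2 c1; lra.
Qed.

Lemma dist1_le_cone : dist1 md xs x <= 2 * sk * d + 2 * tl.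
Proof.
have sk_gt0 : 0 < sk by rewrite sqrtr_gt0 ltr0n.
suff : (dist1 md xs x - 2 * tl) / (2 * sk) <= d.
  by rewrite ler_pdivrMr ?mulr_gt0 // mulrC; lra.
apply: le_dist2 => c c1; rewrite ler_pdivrMr ?mulr_gt0 //.
have tail : \sum_(i in ~: T0) md ((xs - c *: x) i ord0) <= tls + tl.
  rewrite -big_split; apply: ler_sum => i _ /=.
  by rewrite !mxE; apply: le_trans (mdD _ _) _; rewrite mdN mdM c1 mul1r.
have := dist1_le xs x c1; rewrite /norm1 (sumr_setC T0).
have := head_norm1_le c; have := tail_le_cone_norm2 c1; lra.
Qed.

Lemma setC_S_subset (T : {set 'I_n}) : T \subset S -> ~: S \subset ~: T0 :\: T.
Proof.
move=> TS; rewrite subsetD finset.disjoints_subset !finset.setCS TS andbT.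
by rewrite -finset.setUA finset.subsetUl.
Qed.

Lemma T1_subset_S : T1 \subset S.
Proof. by rewrite -finset.setUA subsetU // finset.subsetUl orbT. Qed.

Lemma T2_subset_S : T2 \subset S.
Proof. exact: finset.subsetUr. Qed.

Lemma norm2_tail_xs : norm2 md (restrict (~: S) xs) <= tls / Num.sqrt a%:R.
Proof. exact: (norm2_restrict_tail a_gt0 T1top (setC_S_subset T1_subset_S)). Qed.

Lemma norm2_tail_x : norm2 md (restrict (~: S) x) <= tl / sk.
Proof. exact: (norm2_restrict_tail k_gt0 T2top (setC_S_subset T2_subset_S)). Qed.

Lemma Anorm_tail_xs : Anorm A (restrict (~: S) xs) <= U * (tls / Num.sqrt a%:R).
Proof.
apply: (Anorm_restrict_tail U_ge0 a_gt0 _ T1top (setC_S_subset T1_subset_S)) => w wa.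
by apply: sparse_Anorm_le; apply: leq_trans wa _; rewrite leq_addl.
Qed.

Lemma Anorm_tail_x : Anorm A (restrict (~: S) x) <= U * (tl / sk).
Proof.
apply: (Anorm_restrict_tail U_ge0 k_gt0 _ T2top (setC_S_subset T2_subset_S)) => w wk.
by apply: sparse_Anorm_le; apply: leq_trans wk _; rewrite mul2n -addnn -addnA leq_addr.
Qed.

Lemma lipschitz_restrict_le :
  L * d <= 2 * eta + U * (tls / Num.sqrt a%:R) + U * (tl / sk).
Proof.
have XS v : (norm0 (restrict S v) <= 2 * k + a)%N.
  exact: leq_trans (norm0_restrict _ _) card_S_le.
have /andP[lo _] := hA (XS xs) (XS x); apply: le_trans lo _.
have := rnorm2_vabs_sub_le (A *m restrict S xs) (A *m restrict (~: S) xs)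
  (A *m restrict S x) (A *m restrict (~: S) x).
rewrite -!mulmxDr !restrict_addC.
move=> /le_trans; apply; rewrite -!addrA.
exact: lerD tube (lerD Anorm_tail_xs Anorm_tail_x).
Qed.

Lemma dist2_le_split : dist2 md xs x <= d + tls / Num.sqrt a%:R + tl / sk.
Proof.
suff : dist2 md xs x - (tls / Num.sqrt a%:R + tl / sk) <= d by lra.
apply: le_dist2 => c c1.
have split : xs - c *: x = (restrict S xs - c *: restrict S x) +
    (restrict (~: S) xs - c *: restrict (~: S) x).
  by rewrite -{1}(restrict_addC S xs) -{1}(restrict_addC S x) scalerDr opprD addrACA.
have := dist2_le xs x c1; rewrite split.
have := norm2D (restrict S xs - c *: restrict S x)
  (restrict (~: S) xs - c *: restrict (~: S) x).
have := norm2D (restrict (~: S) xs) (- (c *: restrict (~: S) x)).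
rewrite norm2N norm2Z //; have := norm2_tail_xs; have := norm2_tail_x; lra.
Qed.

End Estimates.

Section Feasibility.
Variables (m n : nat) (A : 'M[F]_(m, n)) (eta : R) (x xs : 'cV[F]_n) (e : 'cV[R]_m).
Hypotheses (e_le : rnorm2 e <= eta) (hxs : in_Delta1 md A eta (vabs md (A *m x) + e) xs).

Lemma in_Delta1_tube : rnorm2 (vabs md (A *m xs) - vabs md (A *m x)) <= 2 * eta.
Proof.
have [feas _] := hxs; move: feas.
have := rnorm2D (vabs md (A *m xs) - (vabs md (A *m x) + e)) e.
by move: e_le; rewrite opprD addrA subrK; lra.
Qed.

Lemma in_Delta1_norm1_le : norm1 md xs <= norm1 md x.
Proof.
have [_ -> //] := hxs.
by rewrite opprD addrA subrr add0r rnorm2N.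
Qed.

End Feasibility.

Theorem corollary_claim_holds : corollary_claim md.
Proof.
move=> m n k r L U A /andP[k_gt0 kn] r_gt0 L_gt0 U_gt0 hA0 hr.
move=> q C1 D1 C2 D2 x eta e xs eta_ge0 e_le hxs.
have [a [a_gt0 ra hX]] := exists_block_size r_gt0 k_gt0.
have hA : phaseless_biLipschitz md A [set w | (norm0 w <= 2 * k + a)%N] L U.
  apply: phaseless_biLipschitz_sub hA0 => w /= wX.
  by apply: le_trans hX; rewrite ler_nat.
have LU : L <= U.
  have X0 : (norm0 (0 : 'cV[F]_n) <= 2 * k + a)%N by rewrite norm0_0.
  apply: (phaseless_biLipschitz_le (i := Ordinal (leq_trans k_gt0 kn)) hA X0) => /=.
  by apply: leq_trans (norm0_delta _) _; lia.
have [T0 [_ T0k _] T0max] := exists_top_set (fun i => md (x i ord0)) [set: 'I_n]%SET k.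
have {}T0k : #|T0| = k by rewrite T0k cardsT card_ord; exact/minn_idPl.
have [T1 T1top _] := exists_top_set (fun i => md (xs i ord0)) (~: T0) a.
have [T2 T2top _] := exists_top_set (fun i => md (x i ord0)) (~: T0) k.
have n1 := in_Delta1_norm1_le e_le hxs.
have tail_le : 0 <= \sum_(i in ~: T0) md (x i ord0) <= sigma1 md k x.
  rewrite sumr_ge0 //= sum_compl_le_sigma1 // => T Tk.
  by apply: T0max; rewrite ?finset.subsetT // T0k.
have cone := tail_le_cone T1 T2 k_gt0 n1 T0k.
have lip := lipschitz_restrict_le k_gt0 a_gt0 (ltW U_gt0) hA (in_Delta1_tube e_le hxs)
  T0k T1top T2top.
have err1 := dist1_le_cone T1 T2 k_gt0 n1 T0k.
have err2 := dist2_le_split k_gt0 a_gt0 T1top T2top.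
have k_ge1 : 1 <= k%:R :> R by rewrite ler1n.
have LU' : 0 < L <= U by rewrite L_gt0 LU.
exact: (error_bounds_of_estimates k_ge1 LU' hr ra eta_ge0 tail_le (dist2_ge0 _ _)
  cone lip err1 err2).
Qed.

End Modulus.

Theorem corollary2p4 (R : realType) :
  corollary_claim (F := R) (@Num.norm _ R) /\
  corollary_claim (F := R[i]) (@Normc.normc R).
Proof.
split; apply: corollary_claim_holds.
- exact: normr0.
- exact: normrN.
- exact: ler_normD.
- exact: normrM.
- exact: normr_ge0.
- exact: normr1.
- exact: Normc.normc0.
- exact: normcN.
- exact: le_normcD.
- exact: Normc.normcM.
- by case=> a b /=; exact: sqrtr_ge0.
- exact: Normc.normc1.
Qed.
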